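(* Let $F\subset S^{2n-1}$ be nonempty. If $\{\lambda_1,\dots,\lambda_n\}$ is linearly independent over $\mathbb{Z}$, then every point $w=(w_1,\dots,w_n)\in\bar F$ with $w_k\ne0$ for all $k$ generates a nonsparse leaf of $S^X_0(F)$. Conversely, if $\{\lambda_1,\dots,\lambda_n\}$ is linearly dependent over $\mathbb{Z}$, then there exists a set $G\subset S^{2n-1}$ such that $S^X_0(G)$ has no nonsparse leaf and $S^X_0(G)$ contains the point $\big(e^{-\lambda_1}/\sqrt n,\dots,e^{-\lambda_n}/\sqrt n\big)$.
   Context: Fix $n\ge1$ and $\lambda=(\lambda_1,\dots,\lambda_n)$ with $\lambda_1=1$, $\lambda_k>0$ for all $k$. For $z\in\mathbb{C}^n$, $t\in\mathbb{C}$ put $\Phi^X(z,t)=(z_1e^{-\lambda_1t},\dots,z_ne^{-\lambda_nt})$; $\mathbb{H}=\{\operatorname{Re}t>0\}$; $S^{2n-1}$ the unit sphere in $\mathbb{C}^n$. $S^X_0(F)=\{\Phi^X(z,t):z\in F,t\in\mathbb{H}\}$; for $z\in\bar F$ its leaf is $L_z=\{\Phi^X(z,t):t\in\mathbb{H}\}$, generated by $z$. A polynomial $q\in\mathbb{C}[z,\bar z]$ is quasi-homogeneous of type $\lambda$ with bidegree $(d_1,d_2)$ if $q(\Phi^X(z,t))=e^{-d_1t}e^{-d_2\bar t}q(z)$ for all $t\in\mathbb{H}$, $z\in\mathbb{C}^n$; $\mathcal{H}_\lambda$ is the set of such polynomials. The leaf $L_z$, $z\in\bar F$, is nonsparse if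 for every open neighborhood $U\subset S^{2n-1}$ of $z$ and every $q\in\mathcal{H}_\lambda$ of bidegree $(d_1,d_2)$ with $d_2\ne0$ and $\bar F\cap U\subset\{q=0\}$, one has $q\equiv0$ on $\mathbb{C}^n$. *)

From Stdlib Require Import Reals ZArith.
From Coquelicot Require Import Complex.
From mathcomp Require Import ssreflect ssrbool ssrfun eqtype ssrnat seq fintype bigop.

Set Implicit Arguments.
Unset Strict Implicit.

Local Open Scope R_scope.
Local Open Scope C_scope.

Definition cexp (t : C) : C := (exp (fst t) * cos (snd t), exp (fst t) * sin (snd t))%R.

Definition Cn (n : nat) := 'I_n -> C.

Definition sumR (n : nat) (f : 'I_n -> R) : R := \big[Rplus/0%R]_(k < n) f k.
Definition prodC (n : nat) (f : 'I_n -> C) : C := \big[Cmult/RtoC 1]_(k < n) f k.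

Definition normsq (n : nat) (z : Cn n) : R := sumR (fun k => (Cmod (z k) ^ 2)%R).
Definition distC (n : nat) (z w : Cn n) : R := sqrt (normsq (fun k => z k - w k)).

Definition sphere (n : nat) (z : Cn n) : Prop := normsq z = 1%R.

Definition closure (n : nat) (F : Cn n -> Prop) (z : Cn n) : Prop :=
  forall eps : R, (0 < eps)%R -> exists x, F x /\ (distC x z < eps)%R.
Definition openC (n : nat) (V : Cn n -> Prop) : Prop :=
  forall z, V z -> exists eps : R, (0 < eps)%R /\ forall x, (distC x z < eps)%R -> V x.

Definition Hplane (t : C) : Prop := (0 < fst t)%R.

Definition Phi (n : nat) (lam : 'I_n -> R) (z : Cn n) (t : C) : Cn n :=
  fun k => z k * cexp (- RtoC (lam k) * t).

Definition S0 (n : nat) (lam : 'I_n -> R) (F : Cn n -> Prop) (p : Cn n) : Prop :=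
  exists z t, F z /\ Hplane t /\ p = Phi lam z t.

(* polynomials in C[z, zbar]: finite lists of monomials c z^a zbar^b *)
Definition cpoly (n : nat) := seq (C * (('I_n -> nat) * ('I_n -> nat))).

Definition eval_mono (n : nat) (m : C * (('I_n -> nat) * ('I_n -> nat))) (z : Cn n) : C :=
  m.1 * prodC (fun k => Cpow (z k) (m.2.1 k) * Cpow (Cconj (z k)) (m.2.2 k)).

Definition evalp (n : nat) (q : cpoly n) (z : Cn n) : C :=
  foldr (fun m acc => eval_mono m z + acc) (RtoC 0) q.

Definition quasi_hom (n : nat) (lam : 'I_n -> R) (q : cpoly n) (d1 d2 : R) : Prop :=
  forall t z, Hplane t ->
    evalp q (Phi lam z t) = cexp (- RtoC d1 * t) * cexp (- RtoC d2 * Cconj t) * evalp q z.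

(* the leaf L_z (z in closure F) is nonsparse.  Open neighbourhoods U of z in
   S^{2n-1} are exactly the sets V ∩ S^{2n-1} with V open in C^n, V z. *)
Definition nonsparse (n : nat) (lam : 'I_n -> R) (F : Cn n -> Prop) (z : Cn n) : Prop :=
  forall V : Cn n -> Prop, openC V -> V z ->
  forall (q : cpoly n) (d1 d2 : R), quasi_hom lam q d1 d2 -> d2 <> 0%R ->
    (forall x, closure F x -> sphere x -> V x -> evalp q x = RtoC 0) ->
    forall x, evalp q x = RtoC 0.

Definition Z_indep (n : nat) (lam : 'I_n -> R) : Prop :=
  forall m : 'I_n -> Z, sumR (fun k => (IZR (m k) * lam k)%R) = 0%R -> forall k, m k = 0%Z.

From HB Require Import structures.
From Stdlib Require Import Reals ZArith Lra Lia List Classical FunctionalExtensionality.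
From Coquelicot Require Import Complex.
From mathcomp Require Import ssreflect ssrbool ssrfun eqtype ssrnat seq fintype bigop.

(* A monomial c z^a zbar^b has the weight pair (wt a, wt b), wt a = sum_k
   lambda_k a_k; along the flow it is multiplied by e^{-wt a t - wt b tbar}
   (monomial_Phi).

   Independent weights.  Pick x in F near w with nonzero coordinates.  If q
   vanishes at x it vanishes on the whole leaf of x (quasi-homogeneity).  At
   t = (j+1)u this says that the power sums sum_m c_m x^a_m xbar^b_m zeta_m^(j+1)
   vanish, with nodes zeta_m = e^{-wt a_m u - wt b_m ubar}.  For a well chosen u
   the node determines the weight pair (node_injective), and by Z-independence
   the weight determines the exponent (wt_injective).  The Vandermonde-type
   lemma power_sums_vanish then allows us to replace the values x^a xbar^b by
   y^a ybar^b for any y, so q(y) = 0 (leaf_zero_forces_zero).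

   Dependent weights.  An integer relation gives exponents a, b of equal
   positive weight D with a coordinate k0 outside supp a and inside supp b.
   For the single point G = {z0}, z0 = (1/sqrt n, ..., 1/sqrt n), the
   polynomial zbar0^b zbar^a - zbar0^a zbar^b is quasi-homogeneous of bidegree
   (0, D), vanishes at z0 and is not identically zero, so the only leaf of
   S^X_0(G) is sparse (point_leaf_sparse); its point Phi(z0, 1) is the
   required point (e^{-lambda_k}/sqrt n)_k. *)

Set Implicit Arguments.
Unset Strict Implicit.
Local Open Scope R_scope.
Local Open Scope C_scope.

Lemma Ceq (a b : C) : fst a = fst b -> snd a = snd b -> a = b.
Proof. by case: a b => [x y] [u v] /= -> ->. Qed.

Lemma cexp_add a b : cexp (a + b) = cexp a * cexp b.
Proof.
case: a b => [x y] [u v]; rewrite /cexp /=.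
by apply: Ceq; rewrite /= exp_plus ?cos_plus ?sin_plus; ring.
Qed.

Lemma cexp_conj a : Cconj (cexp a) = cexp (Cconj a).
Proof.
case: a => [x y]; rewrite /cexp /Cconj /=.
by apply: Ceq; rewrite /= ?cos_neg ?sin_neg; ring.
Qed.

Lemma cexp0 : cexp (RtoC 0) = RtoC 1.
Proof. by apply: Ceq; rewrite /= ?exp_0 ?cos_0 ?sin_0; ring. Qed.

Lemma cexp_pow a j : Cpow (cexp a) j = cexp (RtoC (INR j) * a).
Proof.
elim: j => [|j IH].
- have -> : RtoC (INR 0) * a = RtoC 0 by apply: Ceq => /=; ring.
  by rewrite cexp0.
- rewrite Cpow_S IH -cexp_add S_INR; congr cexp; apply: Ceq => /=; ring.
Qed.

Lemma Cmod_cexp a : Cmod (cexp a) = exp (fst a).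
Proof.
case: a => [x y]; rewrite /Cmod /cexp /=.
have -> : ((exp x * cos y) * ((exp x * cos y) * 1) + (exp x * sin y) * ((exp x * sin y) * 1))%R
  = (exp x * exp x * (Rsqr (sin y) + Rsqr (cos y)))%R by rewrite /Rsqr; ring.
rewrite sin2_cos2 Rmult_1_r sqrt_square //; exact: Rlt_le (exp_pos x).
Qed.

Lemma cexp_nz a : cexp a <> RtoC 0.
Proof.
move=> E; have := Cmod_cexp a; rewrite E Cmod_0 => E0.
by have := exp_pos (fst a); lra.
Qed.

Lemma cexp_inj a b : cexp a = cexp b -> fst a = fst b /\ sin (snd a - snd b) = 0%R.
Proof.
move=> E; have Ere : fst a = fst b by apply: exp_inv; rewrite -!Cmod_cexp E.
split=> //; case: a b E Ere => [x y] [u v] E /= Eu; subst u.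
case: E => Ec Es; have ex := exp_pos x.
have c : cos y = cos v by apply: (Rmult_eq_reg_l (exp x)); lra.
have s : sin y = sin v by apply: (Rmult_eq_reg_l (exp x)); lra.
by rewrite sin_minus c s; ring.
Qed.

Lemma RplusA : associative Rplus. Proof. by move=> *; ring. Qed.
HB.instance Definition _ := Monoid.isComLaw.Build R 0%R Rplus RplusA Rplus_comm Rplus_0_l.

Lemma CmultA : associative Cmult. Proof. by move=> *; ring. Qed.
Lemma CmultC : commutative Cmult. Proof. by move=> *; ring. Qed.
Lemma Cmult1l : left_id (RtoC 1) Cmult. Proof. by move=> *; ring. Qed.
HB.instance Definition _ := Monoid.isComLaw.Build C (RtoC 1) Cmult CmultA CmultC Cmult1l.

Lemma sumR_const n c : sumR (fun _ : 'I_n => c) = (INR n * c)%R.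
Proof.
rewrite /sumR big_const_ord; elim: n => [|n IH]; first by rewrite /=; ring.
by rewrite iterS IH S_INR; ring.
Qed.

Lemma sumR_term n (f : 'I_n -> R) j : (forall k, 0 <= f k)%R -> (f j <= sumR f)%R.
Proof.
move=> f_ge0; rewrite /sumR (bigD1 j) //=; set rest := (X in (_ <= _ + X)%R).
suff : (0 <= rest)%R by lra.
apply: (big_rec (fun a => 0 <= a)%R); first lra.
by move=> i x _ Hx; have := f_ge0 i; lra.
Qed.

Lemma sumR_ge0 n (f : 'I_n -> R) : (forall k, 0 <= f k)%R -> (0 <= sumR f)%R.
Proof.
case: n f => [|n] f f_ge0; first by rewrite /sumR big_ord0; lra.
exact: Rle_trans (f_ge0 ord0) (sumR_term ord0 f_ge0).
Qed.

Lemma sumR_sub n (f g : 'I_n -> R) : sumR (fun k => f k - g k)%R = (sumR f - sumR g)%R.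
Proof.
rewrite /sumR; apply: (big_rec3 (fun x y z => x = y - z)%R); first ring.
by move=> i y1 y2 y3 _ ->; ring.
Qed.

Lemma prodC_mul n (f g : 'I_n -> C) : prodC (fun k => f k * g k) = prodC f * prodC g.
Proof.
rewrite /prodC; apply: (big_rec3 (fun a b c => a = b * c)); first ring.
by move=> i y1 y2 y3 _ ->; ring.
Qed.

Lemma prodC_cexp n (r : 'I_n -> R) (t : C) :
  prodC (fun k => cexp (- RtoC (r k) * t)) = cexp (- RtoC (sumR r) * t).
Proof.
rewrite /prodC /sumR; apply: (big_rec2 (fun a b => a = cexp (- RtoC b * t))).
- by rewrite -cexp0; congr cexp; apply: Ceq => /=; ring.
- by move=> i y1 y2 _ ->; rewrite -cexp_add; congr cexp; apply: Ceq => /=; ring.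
Qed.

Lemma prodC_nz n (f : 'I_n -> C) : (forall k, f k <> RtoC 0) -> prodC f <> RtoC 0.
Proof.
move=> f_nz; rewrite /prodC; apply: (big_rec (fun a => a <> RtoC 0)).
- by case; lra.
- by move=> i x _ Hx; apply: Cmult_neq_0.
Qed.

Lemma prodC_zero n (f : 'I_n -> C) k : f k = RtoC 0 -> prodC f = RtoC 0.
Proof. by move=> fk0; rewrite /prodC (bigD1 k) //= fk0; ring. Qed.

Lemma prodC_one n (f : 'I_n -> C) : (forall k, f k = RtoC 1) -> prodC f = RtoC 1.
Proof.
move=> f1; rewrite /prodC; apply: (big_rec (fun a => a = RtoC 1)) => // i x _ ->.
by rewrite f1; ring.
Qed.

Lemma min_pos n (f : 'I_n -> R) :
  (forall k, 0 < f k)%R -> exists e, (0 < e)%R /\ forall k, (e <= f k)%R.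
Proof.
move=> f_pos.
suff [e [e_pos le_e]] : exists e, (0 < e)%R /\ forall k, k \in enum 'I_n -> (e <= f k)%R.
  by exists e; split=> // k; apply: le_e; rewrite mem_enum.
elim: (enum 'I_n) => [|h t [e [e_pos le_e]]]; first by exists 1%R; split=> //; lra.
exists (Rmin e (f h)); split; first exact: Rmin_pos.
move=> k; rewrite in_cons => /orP [/eqP -> | kt]; first exact: Rmin_r.
exact: Rle_trans (Rmin_l _ _) (le_e k kt).
Qed.

Lemma Cmod_le_dist n (x w : Cn n) k : (Cmod (x k - w k) <= distC x w)%R.
Proof.
rewrite /distC -(sqrt_pow2 _ (Cmod_ge_0 (x k - w k))); apply: sqrt_le_1_alt.
exact: (sumR_term k (fun i => pow2_ge_0 (Cmod (x i - w i)))).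
Qed.

Lemma distC_refl n (x : Cn n) : distC x x = 0%R.
Proof.
rewrite /distC /normsq.
have -> : (fun k => Cmod (x k - x k) ^ 2)%R = (fun _ : 'I_n => 0%R).
{ apply: functional_extensionality => k.
  have -> : x k - x k = RtoC 0 by ring.
  by rewrite Cmod_0; ring. }
by rewrite sumR_const Rmult_0_r sqrt_0.
Qed.

Lemma closure_self n (F : Cn n -> Prop) x : F x -> closure F x.
Proof. by move=> Fx eps eps_pos; exists x; rewrite distC_refl. Qed.

Lemma closure_point n (z0 z : Cn n) : closure (fun x => x = z0) z -> z = z0.
Proof.
move=> cl; have d0 : distC z0 z = 0%R.
  case: (sqrt_pos (normsq (fun k => z0 k - z k))) => // d_pos.
  by have [x [-> dx]] := cl _ d_pos; rewrite /distC in dx; lra.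
apply: functional_extensionality => k.
have := Cmod_le_dist z0 z k; rewrite d0 => le0.
have /Cmod_eq_0 E : Cmod (z0 k - z k) = 0%R by have := Cmod_ge_0 (z0 k - z k); lra.
by rewrite -[z k]Cplus_0_r -E; ring.
Qed.

Definition sumL {T : Type} (l : seq T) (f : T -> C) : C :=
  foldr (fun m acc => f m + acc) (RtoC 0) l.

Lemma evalpE n (q : cpoly n) z : evalp q z = sumL q (fun m => eval_mono m z).
Proof. by []. Qed.

Section ListSums.
Variable T : Type.
Implicit Types (l : seq T) (f g : T -> C).

Lemma sumL_ext l f g : (forall m, In m l -> f m = g m) -> sumL l f = sumL l g.
Proof.
elim: l => [|h t IH] fg //=.
by rewrite fg ?IH //; [move=> m mt; apply: fg; right | left].
Qed.

Lemma sumL_zero l f : (forall m, In m l -> f m = RtoC 0) -> sumL l f = RtoC 0.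
Proof.
move=> f0; rewrite (sumL_ext (g := fun=> RtoC 0)) //.
by elim: l {f0} => //= h t ->; ring.
Qed.

Lemma sumL_scal l a f : sumL l (fun m => a * f m) = a * sumL l f.
Proof. by elim: l => [|h t IH] /=; [ring | rewrite IH; ring]. Qed.

Lemma sumL_sub l f g : sumL l (fun m => f m - g m) = sumL l f - sumL l g.
Proof. by elim: l => [|h t IH] /=; [ring | rewrite IH; ring]. Qed.

Lemma sumL_filter l (p : T -> bool) f :
  sumL l f = sumL (List.filter p l) f + sumL (List.filter (fun x => ~~ p x) l) f.
Proof. by elim: l => [|h t IH] /=; [ring | rewrite IH; case: (p h) => /=; ring]. Qed.

End ListSums.

(** * Weights of monomials and the flow *)

Definition wt n (lam : 'I_n -> R) (a : 'I_n -> nat) : R :=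
  sumR (fun k => (lam k * INR (a k))%R).

Section Weights.
Variables (n : nat) (lam : 'I_n -> R).
Hypothesis lam_pos : forall k, (0 < lam k)%R.

Lemma wt_ge0 a : (0 <= wt lam a)%R.
Proof. by apply: sumR_ge0 => k; apply: Rmult_le_pos; [apply: Rlt_le | apply: pos_INR]. Qed.

Lemma wt_null : wt lam (fun=> 0%nat) = 0%R.
Proof.
rewrite /wt; have -> : (fun k => lam k * INR 0)%R = (fun=> 0%R).
  by apply: functional_extensionality => k /=; ring.
by rewrite sumR_const; ring.
Qed.

Lemma wt_eq0 a : wt lam a = 0%R -> forall k, a k = 0%nat.
Proof.
move=> wt0 k; apply: INR_eq; have := lam_pos k; have := pos_INR (a k).
have : (lam k * INR (a k) <= 0)%R.
  rewrite -wt0; apply: (sumR_term k) => i.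
  by apply: Rmult_le_pos; [apply: Rlt_le | apply: pos_INR].
by rewrite /=; nra.
Qed.

End Weights.

Lemma wt_injective n (lam : 'I_n -> R) a a' :
  Z_indep lam -> wt lam a = wt lam a' -> a = a'.
Proof.
move=> indep E; apply: functional_extensionality => k.
have rel : sumR (fun k => (IZR (Z.of_nat (a k) - Z.of_nat (a' k)) * lam k)%R) = 0%R.
  have -> : (fun k => IZR (Z.of_nat (a k) - Z.of_nat (a' k)) * lam k)%R =
            (fun k => lam k * INR (a k) - lam k * INR (a' k))%R.
    by apply: functional_extensionality => i; rewrite minus_IZR -!INR_IZR_INZ; ring.
  by rewrite sumR_sub -/(wt lam a) -/(wt lam a') E; ring.
by have := indep _ rel k; lia.
Qed.

Lemma coordinate_Phi (l : R) (a b : nat) (zk t : C) :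
  Cpow (zk * cexp (- RtoC l * t)) a * Cpow (Cconj (zk * cexp (- RtoC l * t))) b
  = (Cpow zk a * Cpow (Cconj zk) b) *
    (cexp (- RtoC (l * INR a) * t) * cexp (- RtoC (l * INR b) * Cconj t)).
Proof.
rewrite Cmult_conj cexp_conj !Cpow_mult_l !cexp_pow.
have -> : RtoC (INR a) * (- RtoC l * t) = - RtoC (l * INR a) * t by apply: Ceq => /=; ring.
have -> : RtoC (INR b) * Cconj (- RtoC l * t) = - RtoC (l * INR b) * Cconj t
  by apply: Ceq; simpl; ring.
ring.
Qed.

Lemma monomial_Phi n (lam : 'I_n -> R) m (z : Cn n) t :
  eval_mono m (Phi lam z t) =
  eval_mono m z * cexp (- RtoC (wt lam m.2.1) * t) * cexp (- RtoC (wt lam m.2.2) * Cconj t).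
Proof.
rewrite /eval_mono /Phi.
have -> : (fun k => Cpow (z k * cexp (- RtoC (lam k) * t)) (m.2.1 k) *
                   Cpow (Cconj (z k * cexp (- RtoC (lam k) * t))) (m.2.2 k)) =
          (fun k => (Cpow (z k) (m.2.1 k) * Cpow (Cconj (z k)) (m.2.2 k)) *
             (cexp (- RtoC (lam k * INR (m.2.1 k)) * t) *
              cexp (- RtoC (lam k * INR (m.2.2 k)) * Cconj t))).
  by apply: functional_extensionality => k; apply: coordinate_Phi.
rewrite prodC_mul [prodC (fun k => cexp _ * cexp _)]prodC_mul.
have := prodC_cexp (fun k => lam k * INR (m.2.1 k))%R t.
have := prodC_cexp (fun k => lam k * INR (m.2.2 k))%R (Cconj t).
by rewrite /wt => /= -> ->; ring.
Qed.

Lemma evalp_Phi n (lam : 'I_n -> R) (q : cpoly n) z t :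
  evalp q (Phi lam z t) = sumL q (fun m => eval_mono m z *
     cexp (- RtoC (wt lam m.2.1) * t) * cexp (- RtoC (wt lam m.2.2) * Cconj t)).
Proof. by rewrite evalpE; apply: sumL_ext => m _; apply: monomial_Phi. Qed.

Lemma quasi_hom_of_weights n (lam : 'I_n -> R) (q : cpoly n) d1 d2 :
  (forall m, In m q -> wt lam m.2.1 = d1 /\ wt lam m.2.2 = d2) -> quasi_hom lam q d1 d2.
Proof.
move=> wq t z _; rewrite evalp_Phi evalpE -sumL_scal.
by apply: sumL_ext => m mq; have [-> ->] := wq m mq; ring.
Qed.

Lemma monomial_nz n (z : Cn n) (e : ('I_n -> nat) * ('I_n -> nat)) :
  (forall k, z k <> RtoC 0) -> eval_mono (RtoC 1, e) z <> RtoC 0.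
Proof.
move=> z_nz; rewrite /eval_mono Cmult_1_l; apply: prodC_nz => k.
apply: Cmult_neq_0; apply: Cpow_nz => // E; apply: (z_nz k).
by rewrite -[z k]Cconj_conj E; apply: Ceq; simpl; ring.
Qed.

(** * Vanishing power sums *)

Definition Ceq_dec (a b : C) : {a = b} + {a <> b}.
Proof.
case: a b => [x y] [u v].
case: (Req_EM_T x u) => [<-|ne]; last by right; case.
by case: (Req_EM_T y v) => [<-|ne]; [left | right; case].
Defined.

Section PowerSums.
Variables (T : Type) (z : T -> C).

Definition off_node (z0 : C) (m : T) : bool := if Ceq_dec (z m) z0 then false else true.

Lemma In_off_node z0 l m :
  In m (List.filter (off_node z0) l) -> In m l /\ z m <> z0.
Proof. by rewrite filter_In /off_node; case: Ceq_dec => [E|ne] [ml b]. Qed.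

Lemma In_on_node z0 l m :
  In m (List.filter (fun x => ~~ off_node z0 x) l) -> In m l /\ z m = z0.
Proof. by rewrite filter_In /off_node; case: Ceq_dec => [E|ne] [ml b]. Qed.

(* multiplying the coefficients by (z - z0) keeps the power sums vanishing and
   kills the terms at the node z0 *)
Lemma power_sums_deflate l (c : T -> C) z0 :
  (forall j, sumL l (fun m => c m * Cpow (z m) j.+1) = RtoC 0) ->
  forall j, sumL (List.filter (off_node z0) l)
                 (fun m => c m * (z m - z0) * Cpow (z m) j.+1) = RtoC 0.
Proof.
move=> pw j.
have : sumL l (fun m => c m * (z m - z0) * Cpow (z m) j.+1) = RtoC 0.
  rewrite (sumL_ext (g := fun m => c m * Cpow (z m) j.+2 - z0 * (c m * Cpow (z m) j.+1))).
    by rewrite sumL_sub sumL_scal !pw; ring.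
  by move=> m _; rewrite !Cpow_S; ring.
rewrite (sumL_filter l (off_node z0)).
rewrite (sumL_zero (l := List.filter (fun x => ~~ off_node z0 x) l)) ?Cplus_0_r //.
by move=> m /In_on_node [_ ->]; ring.
Qed.

(* Induction on the length: with z0 the first node, the deflated system on the
   other nodes gives sum_off c e = 0 for node functions e; the first power sum
   then shows that the coefficients at the node z0 add up to 0. *)
Lemma power_sums_vanish l (c d : T -> C) :
  (forall m, In m l -> z m <> RtoC 0) ->
  (forall m m', In m l -> In m' l -> z m = z m' -> d m = d m') ->
  (forall j, sumL l (fun m => c m * Cpow (z m) j.+1) = RtoC 0) ->
  sumL l (fun m => c m * d m) = RtoC 0.
Proof.
have [N] := ubnP (length l); elim: N => // N IH in l c d *.
case: l => [|h t] // size_lt z_nz d_node pw.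
set z0 := z h; set l := h :: t.
set off := List.filter (off_node z0) l; set on := List.filter (fun x => ~~ off_node z0 x) l.
have off_lt : (length off < N)%N.
  have h_on : off_node z0 h = false by rewrite /off_node; case: Ceq_dec.
  rewrite /off /= h_on; apply: (@leq_ltn_trans (length t)) => //.
  by apply/leP; apply: filter_length_le.
have sub_off m : In m off -> In m l /\ z m - z0 <> RtoC 0.
  move=> /In_off_node [ml ne]; split=> // E; apply: ne.
  have -> : z m = (z m - z0) + z0 by ring.
  by rewrite E; ring.
have off_vanish (e : T -> C) :
    (forall m m', In m off -> In m' off -> z m = z m' -> e m = e m') ->
    sumL off (fun m => c m * e m) = RtoC 0.
  move=> e_node.
  rewrite (sumL_ext (g := fun m => c m * (z m - z0) * (e m / (z m - z0)))); last first.
    by move=> m /sub_off [_ ne]; field.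
  apply: IH => //.
  - by move=> m /sub_off [ml _]; apply: z_nz.
  - by move=> m m' mo m'o E; rewrite (e_node m m') // E.
  - exact: power_sums_deflate.
have sum_on : z0 * sumL on c = RtoC 0.
  have := pw 0%nat; rewrite (sumL_filter _ (off_node z0)) -/off -/on.
  rewrite (sumL_ext (l := off) (g := fun m => c m * z m)); last first.
    by move=> m _; rewrite Cpow_S /=; ring.
  rewrite off_vanish // Cplus_0_l -sumL_scal => <-.
  by apply: sumL_ext => m /In_on_node [_ ->]; rewrite Cpow_S /=; ring.
rewrite (sumL_filter _ (off_node z0)) -/off -/on off_vanish; last first.
  by move=> m m' /sub_off [ml _] /sub_off [m'l _]; apply: d_node.
rewrite (sumL_ext (l := on) (g := fun m => d h * c m)); last first.
  by move=> m /In_on_node [ml E]; rewrite (d_node m h) //; [ring | left].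
have z0_nz : z0 <> RtoC 0 by apply: z_nz; left.
rewrite sumL_scal (_ : sumL on c = RtoC 0); first ring.
by rewrite -[sumL on c]Cmult_1_l -(Cinv_l z0) // -Cmult_assoc sum_on; ring.
Qed.

End PowerSums.

(** * Separating weight pairs by a single exponential *)

Lemma IZR_PI_small (k : Z) : (Rabs (IZR k * PI) < 1)%R -> k = 0%Z.
Proof.
move=> small; have := PI2_1; case: k small => [|p|p] // small pi_gt1; exfalso.
- have : (1 <= IZR (Z.pos p))%R by apply: IZR_le; lia.
  by move=> ge1; rewrite Rabs_right in small; nra.
- have : (IZR (Z.neg p) <= -1)%R by apply: IZR_le; lia.
  by move=> le_m1; rewrite Rabs_left in small; nra.
Qed.

Lemma node_injective (A B A' B' M : R) :
  (0 <= A)%R -> (0 <= B)%R -> (0 <= A')%R -> (0 <= B')%R ->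
  (A + B <= M)%R -> (A' + B' <= M)%R ->
  let u := ((1%R, / (2 * M + 1))%R : C) in
  cexp (- RtoC A * u - RtoC B * Cconj u) = cexp (- RtoC A' * u - RtoC B' * Cconj u) ->
  A = A' /\ B = B'.
Proof.
move=> hA hB hA' hB' hM hM' u /cexp_inj [/= Ere Eim].
set th := (/ (2 * M + 1))%R in Eim.
have th_pos : (0 < th)%R by apply: Rinv_0_lt_compat; lra.
have [k Ek] := sin_eq_0_0 _ Eim.
have Eim' : ((B - A - B' + A') * th = IZR k * PI)%R by rewrite -Ek; ring.
have k0 : k = 0%Z.
  apply: IZR_PI_small; rewrite -Eim' Rabs_mult (Rabs_right th); last lra.
  have : (Rabs (B - A - B' + A') <= 2 * M)%R by apply: Rabs_le; lra.
  have : (th * (2 * M + 1) = 1)%R by rewrite /th; field; lra.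
  by nra.
move: Eim'; rewrite k0 Rmult_0_l => /Rmult_integral [|]; lra.
Qed.

Lemma weight_bound n (lam : 'I_n -> R) (q : cpoly n) :
  exists M, forall m, In m q -> (wt lam m.2.1 + wt lam m.2.2 <= M)%R.
Proof.
elim: q => [|h t [M le_M]]; first by exists 0%R.
exists (Rmax M (wt lam h.2.1 + wt lam h.2.2)) => m [<-|mt]; first exact: Rmax_r.
exact: Rle_trans (le_M m mt) (Rmax_l _ _).
Qed.

(** * Independent weights: vanishing on a leaf forces vanishing everywhere *)

Lemma eval_mono_coef n m (z : Cn n) : eval_mono m z = m.1 * eval_mono (RtoC 1, m.2) z.
Proof. by rewrite /eval_mono /=; ring. Qed.

Lemma leaf_zero_forces_zero n (lam : 'I_n -> R) (q : cpoly n) (x : Cn n) :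
  (forall k, 0 < lam k)%R -> Z_indep lam -> (forall k, x k <> RtoC 0) ->
  (forall t, Hplane t -> evalp q (Phi lam x t) = RtoC 0) ->
  forall y, evalp q y = RtoC 0.
Proof.
move=> lam_pos indep x_nz leaf0 y.
have [M le_M] := weight_bound lam q.
set u := ((1%R, / (2 * M + 1))%R : C).
set node := fun m : C * (('I_n -> nat) * ('I_n -> nat)) =>
  cexp (- RtoC (wt lam m.2.1) * u - RtoC (wt lam m.2.2) * Cconj u).
set P := fun (m : C * (('I_n -> nat) * ('I_n -> nat))) (z : Cn n) => eval_mono (RtoC 1, m.2) z.
have node_exponents m m' : In m q -> In m' q -> node m = node m' -> m.2 = m'.2.
  move=> mq m'q /node_injective E.
  have [/(wt_injective indep) Ea /(wt_injective indep) Eb] :=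
    E (wt_ge0 lam_pos _) (wt_ge0 lam_pos _) (wt_ge0 lam_pos _) (wt_ge0 lam_pos _)
      (le_M m mq) (le_M m' m'q).
  by case: m m' {mq m'q E} Ea Eb => [c [a b]] [c' [a' b']] /= -> ->.
have power_sums j : sumL q (fun m => eval_mono m x * Cpow (node m) j.+1) = RtoC 0.
  have Ht : Hplane (RtoC (INR j.+1) * u).
    by rewrite /Hplane /u /Cmult /RtoC; cbn [fst snd]; have := lt_0_INR _ (Nat.lt_0_succ j); lra.
  rewrite -(leaf0 _ Ht) evalp_Phi; apply: sumL_ext => m _.
  rewrite /node cexp_pow -Cmult_assoc -cexp_add; congr (_ * cexp _).
  by apply: Ceq; simpl; ring.
rewrite evalpE -(power_sums_vanish (d := fun m => P m y / P m x) (l := q) _ _ power_sums).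
- apply: sumL_ext => m _; rewrite [eval_mono m y]eval_mono_coef [eval_mono m x]eval_mono_coef.
  by rewrite /P; field; apply: monomial_nz.
- by move=> m _; apply: cexp_nz.
- by move=> m m' mq m'q /(node_exponents _ _ mq m'q); rewrite /P => ->.
Qed.

Lemma nearby_nonzero_point n (F V : Cn n -> Prop) (w : Cn n) :
  closure F w -> (forall k, w k <> RtoC 0) -> openC V -> V w ->
  exists x, F x /\ V x /\ forall k, x k <> RtoC 0.
Proof.
move=> clw w_nz openV Vw.
have [e1 [e1_pos ballV]] := openV w Vw.
have [e2 [e2_pos le_e2]] := min_pos (fun k => proj1 (Cmod_gt_0 _) (w_nz k)).
have [x [Fx dx]] := clw _ (Rmin_pos _ _ e1_pos e2_pos).
exists x; split=> //; split.
  by apply: ballV; apply: Rlt_le_trans dx (Rmin_l _ _).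
move=> k xk0; have := Cmod_le_dist x w k.
rewrite xk0 (_ : RtoC 0 - w k = - w k) ?Cmod_opp; last by ring.
by have := le_e2 k; have := Rmin_r e1 e2; lra.
Qed.

(* Part 1: independent weights make every leaf through a point with nonzero
   coordinates nonsparse *)
Lemma independent_weights_nonsparse n (lam : 'I_n -> R) (F : Cn n -> Prop) (w : Cn n) :
  (forall k, 0 < lam k)%R -> (forall z, F z -> sphere z) -> Z_indep lam ->
  closure F w -> (forall k, w k <> RtoC 0) -> nonsparse lam F w.
Proof.
move=> lam_pos F_sphere indep clw w_nz V openV Vw q d1 d2 qh _ q0.
have [x [Fx [Vx x_nz]]] := nearby_nonzero_point clw w_nz openV Vw.
apply: (leaf_zero_forces_zero lam_pos indep x_nz) => t Ht.
by rewrite qh // q0 ?Cmult_0_r //; [apply: closure_self | apply: F_sphere].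
Qed.

(** * Dependent weights: a sparse point leaf *)

Lemma dependent_weights_split n (lam : 'I_n -> R) :
  (forall k, 0 < lam k)%R -> ~ Z_indep lam ->
  exists a b : 'I_n -> nat, wt lam a = wt lam b /\ wt lam a <> 0%R /\
    exists k0, a k0 = 0%nat /\ b k0 <> 0%nat.
Proof.
move=> lam_pos dep.
have [m [rel [k1 mk1]]] : exists m : 'I_n -> Z,
    sumR (fun k => (IZR (m k) * lam k)%R) = 0%R /\ exists k, m k <> 0%Z.
  apply: NNPP => none; apply: dep => m rel k; apply: NNPP => mk.
  by apply: none; exists m; split=> //; exists k.
set a := fun k => Z.to_nat (m k); set b := fun k => Z.to_nat (- m k).
have Eab : wt lam a = wt lam b.
  apply: Rminus_diag_uniq; rewrite /wt -sumR_sub -rel; congr sumR.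
  apply: functional_extensionality => k; rewrite /a /b !INR_IZR_INZ.
  have -> : IZR (m k) = (IZR (Z.of_nat (Z.to_nat (m k))) - IZR (Z.of_nat (Z.to_nat (- m k))))%R
    by rewrite -minus_IZR; congr IZR; lia.
  ring.
have a_nz : wt lam a <> 0%R.
  move=> wa0; have := wt_eq0 lam_pos wa0 k1; rewrite Eab in wa0.
  by have := wt_eq0 lam_pos wa0 k1; rewrite /a /b; lia.
exists a, b; split=> //; split=> //.
have [k0 bk0] : exists k0, b k0 <> 0%nat.
  apply: NNPP => none; apply: a_nz; rewrite Eab -(wt_null lam); congr wt.
  by apply: functional_extensionality => k; apply: NNPP => bk; apply: none; exists k.
by exists k0; split=> //; move: bk0; rewrite /a /b; lia.
Qed.

Lemma point_leaf_sparse n (lam : 'I_n -> R) (z0 y : Cn n) (q : cpoly n) d1 d2 :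
  quasi_hom lam q d1 d2 -> d2 <> 0%R -> evalp q z0 = RtoC 0 -> evalp q y <> RtoC 0 ->
  ~ nonsparse lam (fun x => x = z0) z0.
Proof.
move=> qh d2_nz qz0 qy ns; apply: qy.
apply: (ns (fun=> True)) qh d2_nz _ y => //.
- by move=> x _; exists 1%R; split=> //; lra.
- by move=> x /closure_point ->.
Qed.

Definition conj_monomial n (b : 'I_n -> nat) (z : Cn n) : C :=
  prodC (fun k => Cpow (z k) 0 * Cpow (Cconj (z k)) (b k)).

Definition binomial_poly n (z0 : Cn n) (a b : 'I_n -> nat) : cpoly n :=
  [:: (conj_monomial b z0, (fun=> 0%nat, a)); (- conj_monomial a z0, (fun=> 0%nat, b))].

Lemma binomial_polyE n (z0 z : Cn n) a b :
  evalp (binomial_poly z0 a b) z =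
  conj_monomial b z0 * conj_monomial a z - conj_monomial a z0 * conj_monomial b z.
Proof. by rewrite /evalp /eval_mono /= /conj_monomial /=; ring. Qed.

Lemma binomial_quasi_hom n (lam : 'I_n -> R) (z0 : Cn n) a b :
  wt lam a = wt lam b -> quasi_hom lam (binomial_poly z0 a b) 0 (wt lam a).
Proof.
move=> Eab; apply: quasi_hom_of_weights => m [<-|[<-|[]]] /=;
  by rewrite wt_null ?Eab.
Qed.

(* if k0 lies in supp b but not in supp a, the binomial does not vanish at the
   point with coordinates 1 on supp a and 0 elsewhere *)
Lemma binomial_poly_nonzero n (z0 : Cn n) a b k0 :
  (forall k, z0 k <> RtoC 0) -> a k0 = 0%nat -> b k0 <> 0%nat ->
  exists y, evalp (binomial_poly z0 a b) y <> RtoC 0.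
Proof.
move=> z0_nz ak0 bk0.
set y : Cn n := fun k => if (0 < a k)%N then RtoC 1 else RtoC 0.
have conj0 : Cconj (RtoC 0) = RtoC 0 by apply: Ceq; simpl; ring.
have conj1 : Cconj (RtoC 1) = RtoC 1 by apply: Ceq; simpl; ring.
have ya : conj_monomial a y = RtoC 1.
  apply: prodC_one => k; rewrite /y; case: ltnP => [_|].
    by rewrite conj1 !Cpow_1_l; ring.
  by rewrite leqn0 => /eqP ->; rewrite /=; ring.
have yb : conj_monomial b y = RtoC 0.
  apply: (prodC_zero (k := k0)); rewrite /y ak0 /= conj0.
  by case: (b k0) bk0 => [|j] //= _; ring.
have := monomial_nz (e := (fun=> 0%nat, b)) z0_nz; rewrite /eval_mono Cmult_1_l => nz.
exists y; rewrite binomial_polyE ya yb.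
by have -> : conj_monomial b z0 * RtoC 1 - conj_monomial a z0 * RtoC 0 = conj_monomial b z0 by ring.
Qed.

Definition diag_point n : Cn n := fun=> RtoC (/ sqrt (INR n)).
Arguments diag_point n : clear implicits.

Lemma diag_point_sphere n : (0 < n)%N -> sphere (diag_point n).
Proof.
move=> n_pos; have n_posR : (0 < INR n)%R by apply: lt_0_INR; apply/ltP.
have sqrt_pos : (0 < sqrt (INR n))%R by apply: sqrt_lt_R0.
rewrite /sphere /normsq.
have -> : (fun k => Cmod (diag_point n k) ^ 2)%R = (fun=> / INR n)%R.
  apply: functional_extensionality => k.
  rewrite /diag_point Cmod_R Rabs_right ?pow_inv ?pow2_sqrt //; try lra.
  by apply: Rle_ge; apply: Rlt_le; apply: Rinv_0_lt_compat.
by rewrite sumR_const; field; lra.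
Qed.

Lemma diag_point_flow n (lam : 'I_n -> R) : (0 < n)%N ->
  Phi lam (diag_point n) (RtoC 1) = (fun k => RtoC (exp (- lam k) / sqrt (INR n))).
Proof.
move=> n_pos; have n_posR : (0 < INR n)%R by apply: lt_0_INR; apply/ltP.
have sqrt_pos : (0 < sqrt (INR n))%R by apply: sqrt_lt_R0.
apply: functional_extensionality => k; rewrite /Phi /diag_point.
have -> : - RtoC (lam k) * RtoC 1 = RtoC (- lam k) by apply: Ceq; simpl; ring.
by rewrite /cexp; apply: Ceq; simpl; rewrite cos_0 sin_0; field; lra.
Qed.

Lemma dependent_weights_sparse n (lam : 'I_n -> R) :
  (0 < n)%N -> (forall k, 0 < lam k)%R -> ~ Z_indep lam ->
  exists G : Cn n -> Prop, (forall z, G z -> sphere z) /\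
    (forall z, closure G z -> ~ nonsparse lam G z) /\
    S0 lam G (fun k => RtoC (exp (- lam k) / sqrt (INR n))).
Proof.
move=> n_pos lam_pos dep.
have [a [b [Eab [wa_nz [k0 [ak0 bk0]]]]]] := dependent_weights_split lam_pos dep.
set z0 := diag_point n.
have z0_nz k : z0 k <> RtoC 0.
  have : (0 < / sqrt (INR n))%R.
    by apply: Rinv_0_lt_compat; apply: sqrt_lt_R0; apply: lt_0_INR; apply/ltP.
  by rewrite /z0 /diag_point => pos [E]; lra.
have [y qy] := binomial_poly_nonzero z0_nz ak0 bk0.
exists (fun x => x = z0); split; [|split].
- by move=> z ->; apply: diag_point_sphere.
- move=> z /closure_point ->.
  apply: (point_leaf_sparse (binomial_quasi_hom z0 Eab) wa_nz _ qy).
  by rewrite binomial_polyE; ring.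
- exists z0, (RtoC 1); split=> //; split; first by rewrite /Hplane /=; lra.
  by rewrite diag_point_flow.
Qed.

Theorem proposition3p3 (n : nat) (Hn : (0 < n)%N) (lam : 'I_n -> R) :
  lam (Ordinal Hn) = 1%R -> (forall k, (0 < lam k)%R) ->
  (forall F : Cn n -> Prop, (forall z, F z -> sphere z) -> (exists z, F z) ->
     Z_indep lam ->
     forall w : Cn n, closure F w -> (forall k, w k <> RtoC 0) -> nonsparse lam F w)
  /\
  (~ Z_indep lam ->
     exists G : Cn n -> Prop, (forall z, G z -> sphere z) /\
       (forall z, closure G z -> ~ nonsparse lam G z) /\
       S0 lam G (fun k => RtoC (exp (- lam k) / sqrt (INR n)))).
Proof.
move=> _ lam_pos; split.
- move=> F F_sphere _ indep w clw w_nz.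
  exact: independent_weights_nonsparse lam_pos F_sphere indep clw w_nz.
- exact: dependent_weights_sparse Hn lam_pos.
Qed.
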